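(* Let $X,Y,Z$ be random variables on finite alphabets $\mathcal{X},\mathcal{Y},\mathcal{Z}$, and let $\operatorname{Un}(X\to Z\mid Y)$ be the unique information defined below. Then $\operatorname{Un}(X\to Z\mid Y)\le I(X;Z)$.
   Context: For each $y\in\mathcal{Y}$ with $\Pr(Y=y)>0$, let $(A_y,B_y,C_y)$ be the random triple on $\mathcal{X}\times\mathcal{Y}\times\mathcal{Z}$ with $\Pr(A_y=x,B_y=y',C_y=z)=0$ if $\Pr(Z=z)=0$ and $\Pr(A_y=x,B_y=y',C_y=z)=\Pr(X=x,Y=y',Z=z)\Pr(Z=z\mid Y=y)/\Pr(Z=z)$ otherwise. The unique information is $\operatorname{Un}(X\to Z\mid Y)=\sum_{y:\Pr(Y=y)>0}\Pr(Y=y)\,I(A_y;C_y)$, where $I$ is mutual information. *)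

From HB Require Import structures.
From mathcomp Require Import all_boot all_order all_algebra.
From mathcomp Require Import reals exp.
Set Implicit Arguments.
Unset Strict Implicit.
Unset Printing Implicit Defensive.
Import Order.TTheory GRing.Theory Num.Theory.
Local Open Scope ring_scope.

Section InfoDefs.
Variable R : realType.

Definition is_pmf (T : finType) (P : T -> R) : Prop :=
  (forall t, 0 <= P t) /\ \sum_t P t = 1.

(* Mutual information (natural log) of a pair with joint pmf [Q] on A x B,
   convention 0 log 0 = 0: the sum ranges over the support of Q. *)
Definition mutual_info (A B : finType) (Q : A -> B -> R) : R :=
  let QA := fun a => \sum_b Q a b in
  let QB := fun b => \sum_a Q a b in
  \sum_a \sum_(b | Q a b != 0) Q a b * ln (Q a b / (QA a * QB b)).

Variables (X Y Z : finType).

Definition margY (P : X -> Y -> Z -> R) (y : Y) : R :=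
  \sum_x \sum_z P x y z.
Definition margZ (P : X -> Y -> Z -> R) (z : Z) : R :=
  \sum_x \sum_y P x y z.
Definition margYZ (P : X -> Y -> Z -> R) (y : Y) (z : Z) : R :=
  \sum_x P x y z.
Definition margXZ (P : X -> Y -> Z -> R) (x : X) (z : Z) : R :=
  \sum_y P x y z.

Definition condZY (P : X -> Y -> Z -> R) (y : Y) (z : Z) : R :=
  margYZ P y z / margY P y.

(* The law of the triple (A_y, B_y, C_y). *)
Definition tripleY (P : X -> Y -> Z -> R) (y : Y) : X -> Y -> Z -> R :=
  fun x y' z => if margZ P z == 0 then 0
                else P x y' z * condZY P y z / margZ P z.

Definition IAC (P : X -> Y -> Z -> R) (y : Y) : R :=
  mutual_info (margXZ (tripleY P y)).

Definition unique_info (P : X -> Y -> Z -> R) : R :=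
  \sum_(y | 0 < margY P y) margY P y * IAC P y.

Definition IXZ (P : X -> Y -> Z -> R) : R := mutual_info (margXZ P).

End InfoDefs.

From HB Require Import structures.
From mathcomp Require Import all_boot all_order all_algebra.
From mathcomp Require Import reals exp.
From mathcomp Require Import ring.
Set Implicit Arguments.
Unset Strict Implicit.
Unset Printing Implicit Defensive.
Import Order.TTheory GRing.Theory Num.Theory.
Local Open Scope ring_scope.

(* For each y the pair (A_y, C_y) has law Q_y(x,z) = p(x,z) p(z|y) / p(z), whose
   z-marginal is p(z|y).  Gibbs' inequality shows that mutual information is the
   least divergence D(Q || f (x) Q_C) over sub-probabilities f on the first
   coordinate; choosing f = p_X, on the support of Q_y the ratio becomes
   p(x,z) / (p(x) p(z)), independent of y.  Averaging over y with weights p(y)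
   recombines the Q_y into sum_y p(y) Q_y = p(x,z), which yields I(X;Z). *)

Section Gibbs.
Variable R : realType.

Lemma ln_le_subr1 (x : R) : 0 < x -> ln x <= x - 1.
Proof. by move=> x_gt0; rewrite -[in ln x](subrK 1 x) addrC le_ln1Dx // ltrBrDl subrr. Qed.

Lemma sumr_support_mul (I : finType) (w F : I -> R) :
  \sum_(i | w i != 0) w i * F i = \sum_i w i * F i.
Proof. by rewrite big_mkcond; apply: eq_bigr => i _; case: eqP => // ->; rewrite mul0r. Qed.

Lemma gibbs_ineq (I : finType) (w f : I -> R) :
  (forall i, 0 <= w i) -> (forall i, 0 <= f i) -> (forall i, w i != 0 -> 0 < f i) ->
  \sum_(i | w i != 0) w i * ln (f i / w i) <= \sum_i f i - \sum_i w i.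
Proof.
move=> w_ge0 f_ge0 f_gt0.
rewrite [\sum_i f i](bigID (fun i => w i != 0)) [\sum_i w i](bigID (fun i => w i != 0)) /=.
rewrite [X in _ - (_ + X)]big1 => [|i /negPn/eqP //]; rewrite addr0 addrAC -sumrB.
rewrite -[X in X <= _]addr0; apply: lerD; last exact: sumr_ge0.
apply: ler_sum => i wi_neq0.
have wi_gt0 : 0 < w i by rewrite lt0r wi_neq0 w_ge0.
have -> : f i - w i = w i * (f i / w i - 1) by field.
by rewrite ler_wpM2l ?w_ge0 // ln_le_subr1 // divr_gt0 ?f_gt0.
Qed.

Lemma mutual_info_le_divergence (A B : finType) (Q : A -> B -> R) (f : A -> R) :
  (forall a b, 0 <= Q a b) -> (forall a, 0 <= f a) ->
  (forall a b, Q a b != 0 -> 0 < f a) ->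
  \sum_a f a <= \sum_a \sum_b Q a b ->
  mutual_info Q <=
    \sum_a \sum_(b | Q a b != 0) Q a b * ln (Q a b / (f a * \sum_a' Q a' b)).
Proof.
move=> Q_ge0 f_ge0 f_gt0 f_le.
set QA := fun a => \sum_b Q a b; set QB := fun b => \sum_a Q a b.
have QA_ge0 a : 0 <= QA a by exact: sumr_ge0.
have QA_neq0 a : QA a != 0 -> 0 < f a.
  by move=> /eqP/psumr_neq0P[// | b /andP[_ /lt0r_neq0/f_gt0]].
have split_ln : mutual_info Q = \sum_a \sum_(b | Q a b != 0) Q a b * ln (Q a b / (f a * QB b))
    + \sum_a QA a * ln (f a / QA a).
  rewrite /mutual_info -big_split /=; apply: eq_bigr => a _.
  rewrite /QA big_distrl -(sumr_support_mul (Q a)) -big_split /=.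
  apply: eq_bigr => b Qab_neq0; rewrite -mulrDr.
  have Qab_gt0 : 0 < Q a b by rewrite lt0r Qab_neq0 Q_ge0.
  have QAa_gt0 : 0 < QA a.
    by apply: lt_le_trans Qab_gt0 _; rewrite [QA a](bigD1 b) //= lerDl sumr_ge0.
  have QBb_gt0 : 0 < QB b.
    by apply: lt_le_trans Qab_gt0 _; rewrite [QB b](bigD1 a) //= lerDl sumr_ge0.
  have fa_gt0 := f_gt0 _ _ Qab_neq0.
  rewrite -lnM ?posrE ?divr_gt0 ?mulr_gt0 //; congr (_ * ln _).
  by rewrite /QB; field; rewrite !gt_eqF.
rewrite split_ln gerDl -sumr_support_mul.
apply: le_trans (gibbs_ineq QA_ge0 f_ge0 QA_neq0) _.
by rewrite subr_le0.
Qed.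
End Gibbs.

Section UniqueInformation.
Variables (R : realType) (X Y Z : finType) (P : X -> Y -> Z -> R).
Hypothesis P_ge0 : forall x y z, 0 <= P x y z.
Hypothesis P_sum1 : \sum_x \sum_y \sum_z P x y z = 1.

Definition margX (x : X) : R := \sum_z margXZ P x z.

Definition pmi (x : X) (z : Z) : R := ln (margXZ P x z / (margX x * margZ P z)).

Lemma margXZ_ge0 x z : 0 <= margXZ P x z. Proof. exact: sumr_ge0. Qed.
Lemma margYZ_ge0 y z : 0 <= margYZ P y z. Proof. exact: sumr_ge0. Qed.
Lemma margX_ge0 x : 0 <= margX x.
Proof. by apply: sumr_ge0 => z _; apply: margXZ_ge0. Qed.
Lemma margY_ge0 y : 0 <= margY P y.
Proof. by apply: sumr_ge0 => x _; apply: sumr_ge0. Qed.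
Lemma margZ_ge0 z : 0 <= margZ P z.
Proof. by apply: sumr_ge0 => x _; apply: margXZ_ge0. Qed.

Lemma margY_sumYZ y : margY P y = \sum_z margYZ P y z.
Proof. exact: exchange_big. Qed.
Lemma margZ_sumYZ z : margZ P z = \sum_y margYZ P y z.
Proof. exact: exchange_big. Qed.

Lemma margX_sum1 : \sum_x margX x = 1.
Proof. by rewrite -P_sum1; apply: eq_bigr => x _; apply: exchange_big. Qed.

Lemma margZ0_margXZ x z : margZ P z = 0 -> margXZ P x z = 0.
Proof. by move=> /psumr_eq0P; apply=> // x' _; apply: margXZ_ge0. Qed.
Lemma margZ0_margYZ y z : margZ P z = 0 -> margYZ P y z = 0.
Proof. by rewrite margZ_sumYZ => /psumr_eq0P; apply=> // y' _; apply: margYZ_ge0. Qed.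
Lemma margY0_margYZ y z : margY P y = 0 -> margYZ P y z = 0.
Proof. by rewrite margY_sumYZ => /psumr_eq0P; apply=> // z' _; apply: margYZ_ge0. Qed.

Lemma condZY_ge0 y z : 0 <= condZY P y z.
Proof. by rewrite divr_ge0 ?margYZ_ge0 ?margY_ge0. Qed.

Lemma sum_condZY y : margY P y != 0 -> \sum_z condZY P y z = 1.
Proof. by move=> py_neq0; rewrite -big_distrl /= -margY_sumYZ divff. Qed.

Lemma margXZ_tripleY y x z :
  margXZ (tripleY P y) x z = margXZ P x z * condZY P y z / margZ P z.
Proof.
rewrite /margXZ /tripleY; case: eqP => [->|_]; last by rewrite -!big_distrl.
by rewrite big1 // invr0 mulr0.
Qed.

Lemma margXZ_tripleY_ge0 y x z : 0 <= margXZ (tripleY P y) x z.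
Proof.
by rewrite margXZ_tripleY divr_ge0 ?margZ_ge0 ?(mulr_ge0 (margXZ_ge0 _ _) (condZY_ge0 _ _)).
Qed.

Lemma sum_margXZ_tripleY y z : \sum_x margXZ (tripleY P y) x z = condZY P y z.
Proof.
under eq_bigr do rewrite margXZ_tripleY.
rewrite -!big_distrl /= -/(margZ P z).
have [pz0|pz_neq0] := eqVneq (margZ P z) 0; last by rewrite mulrAC divff ?mul1r.
by rewrite pz0 !mul0r /condZY margZ0_margYZ // mul0r.
Qed.

Lemma sum2_margXZ_tripleY y : margY P y != 0 ->
  \sum_x \sum_z margXZ (tripleY P y) x z = 1.
Proof.
move=> py_neq0; rewrite exchange_big -(sum_condZY py_neq0).
by apply: eq_bigr => z _; apply: sum_margXZ_tripleY.
Qed.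

Lemma IAC_le_pmi y : margY P y != 0 ->
  IAC P y <= \sum_x \sum_z margXZ (tripleY P y) x z * pmi x z.
Proof.
move=> py_neq0; set Q := margXZ (tripleY P y).
have Q_neq0 x z : Q x z != 0 ->
    [/\ margXZ P x z != 0, condZY P y z != 0 & margZ P z != 0].
  by rewrite /Q margXZ_tripleY mulf_eq0 mulf_eq0 invr_eq0 => /norP[/norP[]].
have margX_gt0 x z : Q x z != 0 -> 0 < margX x.
  case/Q_neq0 => pxz_neq0 _ _; rewrite lt0r margX_ge0 andbT.
  by apply: contraNneq pxz_neq0 => /psumr_eq0P -> // z' _; apply: margXZ_ge0.
apply: le_trans (mutual_info_le_divergence (margXZ_tripleY_ge0 y) margX_ge0 margX_gt0 _) _.
  by rewrite margX_sum1 sum2_margXZ_tripleY.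
apply: ler_sum => x _; rewrite -sumr_support_mul; apply: ler_sum => z Qxz_neq0.
have [pxz_neq0 cond_neq0 pz_neq0] := Q_neq0 _ _ Qxz_neq0.
have px_neq0 : margX x != 0 by rewrite gt_eqF // (margX_gt0 _ _ Qxz_neq0).
suff -> : Q x z / (margX x * \sum_x' Q x' z) = margXZ P x z / (margX x * margZ P z) by [].
by rewrite sum_margXZ_tripleY /Q margXZ_tripleY; field; rewrite px_neq0 cond_neq0 pz_neq0.
Qed.

Lemma margY_mul_margXZ_tripleY y x z :
  margY P y * margXZ (tripleY P y) x z = margXZ P x z * margYZ P y z / margZ P z.
Proof.
rewrite margXZ_tripleY /condZY.
have [py0|py_neq0] := eqVneq (margY P y) 0.
  by rewrite py0 margY0_margYZ // !(mul0r, mulr0).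
by rewrite mulrCA !mulrA divfK.
Qed.

Lemma sum_margY_mul_margXZ_tripleY x z :
  \sum_y margY P y * margXZ (tripleY P y) x z = margXZ P x z.
Proof.
under eq_bigr do rewrite margY_mul_margXZ_tripleY.
rewrite -big_distrl -mulr_sumr -margZ_sumYZ /=.
have [pz0|pz_neq0] := eqVneq (margZ P z) 0; last by rewrite mulfK.
by rewrite margZ0_margXZ // !mul0r.
Qed.

Lemma IXZ_pmi : IXZ P = \sum_x \sum_z margXZ P x z * pmi x z.
Proof. by rewrite /IXZ /mutual_info; under eq_bigr do rewrite sumr_support_mul. Qed.

Lemma IXZ_mixture :
  IXZ P = \sum_y margY P y * \sum_x \sum_z margXZ (tripleY P y) x z * pmi x z.
Proof.
rewrite IXZ_pmi.
under eq_bigr do under eq_bigr do rewrite -sum_margY_mul_margXZ_tripleY big_distrl.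
under eq_bigr do rewrite exchange_big /=.
rewrite exchange_big; apply: eq_bigr => y _.
rewrite big_distrr; apply: eq_bigr => x _.
by rewrite big_distrr; apply: eq_bigr => z _; rewrite /= mulrA.
Qed.

Lemma unique_info_le_IXZ : unique_info P <= IXZ P.
Proof.
rewrite IXZ_mixture -(sumr_support_mul (margY P)) /unique_info.
rewrite (eq_bigl (fun y => margY P y != 0)) => [|y]; last by rewrite lt0r margY_ge0 andbT.
by apply: ler_sum => y py_neq0; rewrite ler_wpM2l ?margY_ge0 ?IAC_le_pmi.
Qed.
End UniqueInformation.

Theorem lemma4 (R : realType) (X Y Z : finType) (P : X -> Y -> Z -> R)
  (hP : is_pmf (fun t : X * Y * Z => P t.1.1 t.1.2 t.2)) :
  unique_info P <= IXZ P.
Proof.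
case: hP => P_ge0 P_sum1; apply: unique_info_le_IXZ => [x y z|].
  exact: (P_ge0 (x, y, z)).
by rewrite -P_sum1 pair_bigA pair_bigA.
Qed.
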